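(* Let $(X,\tau_1,\tau_2)$ be a bitopological space, $i,j\in\{1,2\}$, $i\neq j$, which is $(i,j)$-almost regular, $(i,j)_1$-nearly paralindelöf, an $(i,j)$-$P_r$-space, a $(j,i)$-$P$-space and a $j$-$P$-space. Then for every cover $\mathcal U$ of $X$ by $(i,j)$-regular open sets there is a cover $\mathcal M$ of $X$ by $i$-open sets such that for every $p\in X$ the star $\mathrm{St}(p,\mathcal M)=\bigcup\{M\in\mathcal M:p\in M\}$ is contained in some member of $\mathcal U$.
   Context: $(X,\tau_1,\tau_2)$ is a bitopological space and $i,j\in\{1,2\}$, $i\neq j$. For $k\in\{1,2\}$ and $A\subseteq X$, $k\text{-}\mathrm{int}(A)$ and $k\text{-}\mathrm{cl}(A)$ denote interior and closure with respect to $\tau_k$; ''$k$-open''/''$k$-closed'' mean $\tau_k$-open/$\tau_k$-closed. A set $A$ is $(i,j)$-regular open if $A=i\text{-}\mathrm{int}(j\text{-}\mathrm{cl}(A))$. A family $\mathcal V$ refines a family $\mathcal U$ if every member of $\mathcal V$ is contained in some member of $\mathcal U$; a family is a cover of $X$ if its union is $X$. A family $\mathcal V$ is $k$-locally countable if every $x\in X$ has a $k$-open neighbourhood meeting at most countably many members of $\mathcal V$. $X$ is a $k$-$P$-space if every intersection of countably many $k$-open sets is $k$-open. $X$ is a $(j,i)$-$P$-space if every intersection of countably many (possibly just one) $j$-open sets is $i$-open. $X$ is an $(i,j)$-$P_r$-space if every intersection of countably many $(i,j)$-regular open sets is $(i,j)$-regular open. $X$ is $(i,j)$-almost regular if for each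 $x\in X$ and each $(i,j)$-regular open set $U$ containing $x$ there is an $(i,j)$-regular open set $V$ with $x\in V\subseteq j\text{-}\mathrm{cl}(V)\subseteq U$. $X$ is $(i,j)_1$-nearly paralindelöf if every cover of $X$ by $(i,j)$-regular open sets has a refinement which is a cover of $X$ by $i$-open sets and which is $j$-locally countable. *)

From Stdlib Require Import Classical.

Section Bitop.
Variable X : Type.

Definition set := X -> Prop.
Definition family := set -> Prop.

Definition subset (A B : set) : Prop := forall x, A x -> B x.
Definition set_eq (A B : set) : Prop := forall x, A x <-> B x.

Record is_topology (T : family) : Prop := {
  top_empty : T (fun _ => False);
  top_full : T (fun _ => True);
  top_union : forall F : family, (forall U, F U -> T U) ->
      T (fun x => exists U, F U /\ U x);
  top_inter : forall U V, T U -> T V -> T (fun x => U x /\ V x)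
}.

Definition interior (T : family) (A : set) : set :=
  fun x => exists U, T U /\ U x /\ subset U A.

Definition closure (T : family) (A : set) : set :=
  fun x => forall U, T U -> U x -> exists y, U y /\ A y.

Definition tau (t1 t2 : family) (k : nat) : family :=
  if Nat.eqb k 1 then t1 else t2.

Definition regular_open (Ti Tj : family) (A : set) : Prop :=
  set_eq A (interior Ti (closure Tj A)).

Definition covers (F : family) : Prop := forall x, exists U, F U /\ U x.

Definition refines (V U : family) : Prop :=
  forall A, V A -> exists B, U B /\ subset A B.

Definition meets (A B : set) : Prop := exists x, A x /\ B x.

Definition countably_many_meet (F : family) (N : set) : Prop :=
  exists f : nat -> set, forall V, F V -> meets V N -> exists n, f n = V.

Definition locally_countable (T : family) (F : family) : Prop :=
  forall x, exists N, T N /\ N x /\ countably_many_meet F N.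

(* countable (nonempty) intersections are indexed by sequences *)
Definition P_space (T : family) : Prop :=
  forall f : nat -> set, (forall n, T (f n)) -> T (fun x => forall n, f n x).

(* (j,i)-P-space: countable intersections of j-open sets are i-open *)
Definition P_space2 (Tj Ti : family) : Prop :=
  forall f : nat -> set, (forall n, Tj (f n)) -> Ti (fun x => forall n, f n x).

Definition Pr_space (Ti Tj : family) : Prop :=
  forall f : nat -> set, (forall n, regular_open Ti Tj (f n)) ->
    regular_open Ti Tj (fun x => forall n, f n x).

Definition almost_regular (Ti Tj : family) : Prop :=
  forall x U, regular_open Ti Tj U -> U x ->
    exists V, regular_open Ti Tj V /\ V x /\
      subset V (closure Tj V) /\ subset (closure Tj V) U.

Definition nearly_paralindelof1 (Ti Tj : family) : Prop :=
  forall U : family, (forall A, U A -> regular_open Ti Tj A) -> covers U ->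
    exists V : family, refines V U /\ covers V /\ (forall A, V A -> Ti A) /\
      locally_countable Tj V.

Definition star (M : family) (p : X) : set :=
  fun x => exists A, M A /\ A p /\ A x.

End Bitop.

(** For each [p], a member [V] of a shrunk refinement containing [p] has its
    [j]-closure inside some [B] of [U]; fixing such a [B = h V] for every [V],
    each point [x] gets the [i]-open neighbourhood
    [N ∩ ⋂ {h V : x ∈ j-cl V} ∩ ⋂ {X \ j-cl V : x ∉ j-cl V}], [V] ranging over
    the countably many members of the refinement that meet the [j]-open [N].
    The [P]-space hypotheses make these countable intersections [i]-open, and
    if [p] lies in the neighbourhood of [x], then the member [V ∋ p] meets [N],
    so [x ∈ j-cl V] and the whole neighbourhood lies in [h V]. *)
From Stdlib Require Import Classical FunctionalExtensionality PropExtensionality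
  IndefiniteDescription.

Lemma set_ext (X : Type) (A B : set X) : set_eq X A B -> A = B.
Proof.
  intro H; apply functional_extensionality; intro x.
  apply propositional_extensionality; apply H.
Qed.

Lemma tau_topology (X : Type) (t1 t2 : family X) (k : nat) :
  is_topology X t1 -> is_topology X t2 -> is_topology X (tau X t1 t2 k).
Proof. intros; unfold tau; destruct (Nat.eqb k 1); assumption. Qed.

Section Closure.
Variables (X : Type) (T : family X).

Lemma subset_closure (A : set X) : subset X A (closure X T A).
Proof. intros x Ax V _ Vx; exists x; auto. Qed.

Lemma closure_monotone (A B : set X) :
  subset X A B -> subset X (closure X T A) (closure X T B).
Proof.
  intros AB x Hx V HV Vx; destruct (Hx V HV Vx) as [y [Vy Ay]]; exists y; auto.
Qed.

Hypothesis HT : is_topology X T.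

Lemma open_interior (S : set X) : T (interior X T S).
Proof.
  replace (interior X T S)
    with (fun x => exists V, (fun V => T V /\ subset X V S) V /\ V x).
  - apply (top_union _ _ HT); intros V [HV _]; exact HV.
  - apply set_ext; intro x; split.
    + intros [V [[HV VS] Vx]]; exists V; auto.
    + intros [V [HV [Vx VS]]]; exists V; auto.
Qed.

Lemma open_compl_closure (A : set X) : T (fun y => ~ closure X T A y).
Proof.
  replace (fun y => ~ closure X T A y)
    with (fun y => exists V, (fun V => T V /\ forall z, V z -> ~ A z) V /\ V y).
  - apply (top_union _ _ HT); intros V [HV _]; exact HV.
  - apply set_ext; intro y; split.
    + intros [V [[HV VA] Vy]] Hcl.
      destruct (Hcl V HV Vy) as [z [Vz Az]]; exact (VA z Vz Az).
    + intro Hn; apply not_all_ex_not in Hn as [V HV].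
      apply imply_to_and in HV as [TV HV]; apply imply_to_and in HV as [Vy HV].
      exists V; repeat split; auto.
      intros z Vz Az; apply HV; exists z; auto.
Qed.

Lemma open_imply (P : Prop) (A : set X) : (P -> T A) -> T (fun y => P -> A y).
Proof.
  intro HA; destruct (classic P) as [p | np].
  - replace (fun y => P -> A y) with A; [auto | apply set_ext; intro y; tauto].
  - replace (fun y => P -> A y) with (fun _ : X => True);
      [apply (top_full _ _ HT) | apply set_ext; intro y; tauto].
Qed.

End Closure.

Section RegularOpen.
Variables (X : Type) (Ti Tj : family X).
Hypothesis HTi : is_topology X Ti.

Lemma regular_open_open (A : set X) : regular_open X Ti Tj A -> Ti A.
Proof.
  intro HA; rewrite (set_ext X _ _ HA); apply open_interior; exact HTi.
Qed.

Lemma regular_open_full : regular_open X Ti Tj (fun _ => True).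
Proof.
  intro x; split; [intros _ | tauto].
  exists (fun _ => True); repeat split; [apply (top_full _ _ HTi) |].
  intros y _; apply subset_closure; exact I.
Qed.

Lemma regular_open_imply (P : Prop) (A : set X) :
  (P -> regular_open X Ti Tj A) -> regular_open X Ti Tj (fun y => P -> A y).
Proof.
  intro HA; destruct (classic P) as [p | np].
  - replace (fun y => P -> A y) with A; [auto | apply set_ext; intro y; tauto].
  - replace (fun y => P -> A y) with (fun _ : X => True);
      [apply regular_open_full | apply set_ext; intro y; tauto].
Qed.

Lemma P_space2_open_inter (N : set X) (b : nat -> set X) :
  P_space2 X Tj Ti -> Tj N -> (forall n, Tj (b n)) ->
  Ti (fun y => N y /\ forall n, b n y).
Proof.
  intros HP HN Hb.
  pose (c n := match n with 0 => N | S m => b m end).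
  replace (fun y => N y /\ forall n, b n y) with (fun y => forall n, c n y).
  - apply HP; intros [|n]; simpl; auto.
  - apply set_ext; intro y; split.
    + intro H; split; [exact (H 0) | intro n; exact (H (S n))].
    + intros [Ny H] [|n]; simpl; auto.
Qed.

End RegularOpen.

Section StarRefinement.
Variables (X : Type) (Ti Tj : family X).
Hypotheses (HTi : is_topology X Ti) (HTj : is_topology X Tj).
Variable U : family X.
Hypothesis HU : forall A, U A -> regular_open X Ti Tj A.

Definition closure_shrinking : family X := fun V =>
  regular_open X Ti Tj V /\ exists B, U B /\ subset X (closure X Tj V) B.

Lemma closure_shrinking_covers :
  almost_regular X Ti Tj -> covers X U -> covers X closure_shrinking.
Proof.
  intros Har Hcov x; destruct (Hcov x) as [B [HB Bx]].
  destruct (Har x B (HU B HB) Bx) as [V [HV [Vx [_ VB]]]].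
  exists V; split; [split; [exact HV | exists B; auto] | exact Vx].
Qed.

Lemma closure_bound_choice (W : family X) :
  refines X W closure_shrinking ->
  exists h : set X -> set X, forall V,
    regular_open X Ti Tj (h V) /\ subset X (closure X Tj V) (h V) /\
    (W V -> U (h V)).
Proof.
  intro Href.
  apply (functional_choice (fun V B : set X => regular_open X Ti Tj B /\
           subset X (closure X Tj V) B /\ (W V -> U B))); intro V.
  destruct (classic (W V)) as [WV | nWV].
  - destruct (Href V WV) as [S [[_ [B [HB SB]]] VS]].
    exists B; split; [apply HU; exact HB | split; [| intros _; exact HB]].
    intros y Hy; apply SB; exact (closure_monotone X Tj V S VS y Hy).
  - exists (fun _ => True); split; [apply regular_open_full; exact HTi |].
    split; [intros y _; exact I | tauto].
Qed.

Definition star_nbhd (h : set X -> set X) (x : X) (N : set X) (f : nat -> set X) : set X :=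
  fun y => (N y /\ forall n, ~ closure X Tj (f n) x -> ~ closure X Tj (f n) y) /\
           forall n, closure X Tj (f n) x -> h (f n) y.

Lemma star_nbhd_open (h : set X -> set X) x N f :
  P_space2 X Tj Ti -> Pr_space X Ti Tj ->
  (forall V, regular_open X Ti Tj (h V)) -> Tj N -> Ti (star_nbhd h x N f).
Proof.
  intros HPji HPr Hh HN; apply (top_inter _ _ HTi).
  - apply (P_space2_open_inter X Ti Tj); auto.
    intro n; apply (open_imply X Tj HTj); intros _; apply (open_compl_closure X Tj HTj).
  - apply (regular_open_open X Ti Tj HTi), HPr.
    intro n; apply (regular_open_imply X Ti Tj HTi); intros _; apply Hh.
Qed.

Lemma star_nbhd_self (h : set X -> set X) x N f :
  (forall V, subset X (closure X Tj V) (h V)) -> N x -> star_nbhd h x N f x.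
Proof. intros Hh Nx; repeat split; auto. intros n; apply Hh. Qed.

Lemma star_nbhd_subset (W : family X) (h : set X -> set X) x N f (V : set X) p :
  (forall V, W V -> meets X V N -> exists n, f n = V) ->
  W V -> V p -> star_nbhd h x N f p -> subset X (star_nbhd h x N f) (h V).
Proof.
  intros Hf WV Vp [[Np Hout] _] y [_ Hin].
  destruct (Hf V WV) as [n <-]; [exists p; auto |].
  apply Hin; apply NNPP; intro Hcl.
  exact (Hout n Hcl (subset_closure X Tj (f n) p Vp)).
Qed.

Theorem regular_cover_star_refinement :
  almost_regular X Ti Tj -> nearly_paralindelof1 X Ti Tj ->
  Pr_space X Ti Tj -> P_space2 X Tj Ti -> covers X U ->
  exists M : family X,
    (forall A, M A -> Ti A) /\ covers X M /\
    (forall p, exists B, U B /\ subset X (star X M p) B).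
Proof.
  intros Har Hnp HPr HPji Hcov.
  destruct (Hnp closure_shrinking (fun A HA => proj1 HA)
              (closure_shrinking_covers Har Hcov))
    as [W [Href [HWcov [_ HWlc]]]].
  destruct (closure_bound_choice W Href) as [h Hh].
  exists (fun A => exists x N f, Tj N /\
            (forall V, W V -> meets X V N -> exists n, f n = V) /\
            A = star_nbhd h x N f).
  split; [| split].
  - intros A [x [N [f [HN [_ ->]]]]].
    apply star_nbhd_open; auto; intro V; apply Hh.
  - intro x; destruct (HWlc x) as [N [HN [Nx [f Hf]]]].
    exists (star_nbhd h x N f); split; [exists x, N, f; auto |].
    apply star_nbhd_self; auto; intro V; apply Hh.
  - intro p; destruct (HWcov p) as [V [WV Vp]].
    exists (h V); split; [apply Hh; exact WV |].
    intros y [A [[x [N [f [_ [Hf ->]]]]] [Ap Ay]]].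
    exact (star_nbhd_subset W h x N f V p Hf WV Vp Ap y Ay).
Qed.

End StarRefinement.

Theorem mainTheorem5 (X : Type) (t1 t2 : family X) (i j : nat)
  (Ht1 : is_topology X t1) (Ht2 : is_topology X t2)
  (Hi : i = 1 \/ i = 2) (Hj : j = 1 \/ j = 2) (Hij : i <> j)
  (Har : almost_regular X (tau X t1 t2 i) (tau X t1 t2 j))
  (Hnp : nearly_paralindelof1 X (tau X t1 t2 i) (tau X t1 t2 j))
  (HPr : Pr_space X (tau X t1 t2 i) (tau X t1 t2 j))
  (HPji : P_space2 X (tau X t1 t2 j) (tau X t1 t2 i))
  (HPj : P_space X (tau X t1 t2 j)) :
  forall U : family X,
    (forall A, U A -> regular_open X (tau X t1 t2 i) (tau X t1 t2 j) A) ->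
    covers X U ->
    exists M : family X,
      (forall A, M A -> tau X t1 t2 i A) /\ covers X M /\
      (forall p, exists B, U B /\ subset X (star X M p) B).
Proof.
  intros U HU Hcov.
  apply (regular_cover_star_refinement X _ (tau X t1 t2 j)); auto;
    apply tau_topology; assumption.
Qed.
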